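(* Let $b\geq 1$ be odd, let $n,k$ be positive integers with $k\leq n-2$, and let $\mathbf{s}=s_1\ldots s_k$ be an integer sequence such that the set $\mathbf{s}\,|\,R_n(b)$ is nonempty. Let $\mathbf{t}$ be the $\prec$-first sequence in $\mathbf{s}\,|\,R_n(b)$, and let $M=\min\{b,\max\{s_i\}_{i=1}^k+1\}$. Then: (1) if $\sum_{i=1}^k s_i$ is odd and $M$ is odd, then $\mathbf{t}=\mathbf{s}M0\ldots0$; (2) if $\sum_{i=1}^k s_i$ is odd and $M$ is even, then $\mathbf{t}=\mathbf{s}M(M+1)0\ldots0$; (3) if $\sum_{i=1}^k s_i$ is even, then $\mathbf{t}=\mathbf{s}0\ldots0$. (In each case the trailing zeros fill the sequence up to length $n$.)
   Context: A restricted growth function of length $n$ is an integer sequence $s_1\ldots s_n$ with $s_1=0$ and $0\leq s_{i+1}\leq \max\{s_j\}_{j=1}^i+1$ for $1\leq i\leq n-1$; $R_n$ is the set of these. For an integer $b\geq1$, $R_n(b)=\{s_1\ldots s_n\in R_n: \max_i s_i\leq b\}$. For a sequence $\mathbf{u}$ and a set $S$ of sequences, $\mathbf{u}\,|\,S$ denotes the subset of $S$ of sequences having prefix $\mathbf{u}$. The Reflected Gray Code Order $\prec$ on length-$n$ sequences of nonnegative integers: $s_1\ldots s_n\prec t_1\ldots t_n$ if, for the smallest $k$ with $s_k\neq t_k$, either $\sum_{i=1}^{k-1}s_i$ is even and $s_k<t_k$, or $\sum_{i=1}^{k-1}s_i$ is odd and $s_k>t_k$. The $\prec$-first sequence of a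 set is its smallest element with respect to $\prec$. *)

From mathcomp Require Import all_boot.
Set Implicit Arguments. Unset Strict Implicit. Unset Printing Implicit Defensive.

(* Restricted growth functions: s_1 = 0 and s_{i+1} <= max(s_1..s_i) + 1.
   Indices are 0-based here. *)
Definition rgf (s : seq nat) : Prop :=
  (0 < size s -> nth 0 s 0 = 0) /\
  forall i, i.+1 < size s ->
    nth 0 s i.+1 <= (\max_(x <- take i.+1 s) x).+1.

Definition Rnb (n b : nat) (u : seq nat) : Prop :=
  size u = n /\ rgf u /\ all (fun x => x <= b) u.

Definition prefRnb (s : seq nat) (n b : nat) (u : seq nat) : Prop :=
  prefix s u /\ Rnb n b u.

Definition rgc_lt (u v : seq nat) : Prop :=
  size u = size v /\
  exists k, [/\ k < size u, take k u = take k v, nth 0 u k <> nth 0 v k &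
    (if odd (sumn (take k u)) then nth 0 v k < nth 0 u k
     else nth 0 u k < nth 0 v k)].

Definition rgc_first (S : seq nat -> Prop) (t : seq nat) : Prop :=
  S t /\ forall u, S u -> u <> t -> rgc_lt t u.

From mathcomp Require Import all_boot.
From mathcomp Require Import zify.
Set Implicit Arguments. Unset Strict Implicit.

(* Each candidate lies in [s | R_n(b)]: its entries after [s] respect the growth
   condition and the bound [b] (when [M] is even, oddness of [b] forces
   [M = max s + 1 < b], so [M + 1] is admissible too).  No other member [u]
   precedes it: at the first position where [u] differs from the candidate, either
   [u] is among the one or two entries following [s], where the parity of the
   prefix sum would require [u] to exceed the largest admissible value, or [u] is
   in the all-zero tail, where the prefix sum is even and [u] would have to be
   negative. *)

Lemma rgf_catl (s w : seq nat) : rgf (s ++ w) -> rgf s.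
Proof.
case=> head0 grow; split.
- move=> s_gt0; have := head0; rewrite nth_cat s_gt0 size_cat; apply; lia.
- move=> i lt_is; have := grow i; rewrite nth_cat take_cat lt_is.
  by apply; rewrite size_cat; lia.
Qed.

Lemma rgf_rcons (s : seq nat) (x : nat) : 0 < size s ->
  rgf (rcons s x) <-> rgf s /\ x <= (\max_(y <- s) y).+1.
Proof.
move=> s_gt0; rewrite -cats1; split.
- move=> rgf_sx; split; first exact: rgf_catl rgf_sx.
  have := rgf_sx.2 (size s).-1; rewrite prednK // nth_cat ltnn subnn.
  rewrite take_size_cat //; apply; rewrite size_cat /=; lia.
- case=> -[head0 grow] x_le; split.
  + by rewrite nth_cat s_gt0 => _; apply: head0.
  + move=> i; rewrite size_cat addn1 ltnS leq_eqVlt => /orP [/eqP size_s | lt_is].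
    * by rewrite nth_cat take_size_cat -size_s ?ltnn ?subnn.
    * by rewrite nth_cat take_cat lt_is; apply: grow.
Qed.

Lemma rgf_cat_cons_le (s w : seq nat) (x : nat) : 0 < size s ->
  rgf (s ++ x :: w) -> x <= (\max_(y <- s) y).+1.
Proof. by move=> s_gt0; rewrite -cat_rcons => /rgf_catl /(rgf_rcons _ s_gt0) []. Qed.

Lemma rgf_cat_nseq0 (s : seq nat) (m : nat) : 0 < size s -> rgf s -> rgf (s ++ nseq m 0).
Proof.
elim: m s => [|m IHm] s s_gt0 rgf_s; first by rewrite cats0.
rewrite /= -cat_rcons; apply: IHm; first by rewrite size_rcons.
exact/rgf_rcons.
Qed.

Lemma rgf_cat_succ_max (s : seq nat) : 0 < size s -> rgf s ->
  rgf (s ++ [:: (\max_(x <- s) x).+1; (\max_(x <- s) x).+2]).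
Proof.
move=> s_gt0 rgf_s; rewrite -cat_rcons cats1.
apply/rgf_rcons; rewrite ?size_rcons //; split; first exact/rgf_rcons.
by rewrite -cats1 big_cat big_seq1 /=; lia.
Qed.

Lemma rgc_lt_cat_diff (s u v : seq nat) : rgc_lt (s ++ u) (s ++ v) ->
  exists j, [/\ j < size v, take j u = take j v, nth 0 u j <> nth 0 v j &
    if odd (sumn s + sumn (take j u)) then nth 0 v j < nth 0 u j
    else nth 0 u j < nth 0 v j].
Proof.
case=> size_eq [k [lt_k take_eq nth_ne lt_nth]].
move: size_eq lt_k take_eq nth_ne lt_nth; rewrite !size_cat !take_cat !nth_cat.
case: (ltnP k (size s)) => [_ _ _ _ /(_ erefl) []|le_sk size_eq lt_k].
move=> /(f_equal (drop (size s))); rewrite !drop_size_cat // => take_eq nth_ne.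
by rewrite sumn_cat; exists (k - size s); split => //; lia.
Qed.

Lemma rgc_lt_cat_cons (s u v : seq nat) (x y : nat) :
  rgc_lt (s ++ x :: u) (s ++ y :: v) -> x <> y ->
  if odd (sumn s) then y < x else x < y.
Proof.
case/rgc_lt_cat_diff => -[|j] [_ /= take_eq _ lt_xy] ne_xy.
  by rewrite addn0 in lt_xy.
by case: take_eq.
Qed.

Lemma no_rgc_lt_cat_nseq0 (s u : seq nat) (m : nat) : ~~ odd (sumn s) ->
  ~ rgc_lt (s ++ u) (s ++ nseq m 0).
Proof.
move=> even_s /rgc_lt_cat_diff [j []]; rewrite size_nseq => lt_jm ->.
by rewrite take_nseq ?(ltnW lt_jm) // sumn_nseq addn0 (negbTE even_s) nth_nseq lt_jm.
Qed.

Lemma no_rgc_lt_odd_cons_nseq0 (s w : seq nat) (a x m : nat) :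
  odd (sumn s) -> odd a -> x <= a -> ~ rgc_lt (s ++ x :: w) (s ++ a :: nseq m 0).
Proof.
move=> odd_s odd_a le_xa; case: (eqVneq x a) => [-> | /eqP ne_xa]; last first.
  by move=> /rgc_lt_cat_cons /(_ ne_xa); rewrite odd_s; lia.
rewrite -!cat_rcons; apply: no_rgc_lt_cat_nseq0.
by rewrite -cats1 sumn_cat /= addn0 oddD odd_s odd_a.
Qed.

Lemma no_rgc_lt_even_cons2_nseq0 (s w : seq nat) (a x y m : nat) :
  odd (sumn s) -> ~~ odd a -> x <= a -> y <= a.+1 ->
  ~ rgc_lt (s ++ x :: y :: w) (s ++ a :: a.+1 :: nseq m 0).
Proof.
move=> odd_s even_a le_xa le_ya; case: (eqVneq x a) => [-> | /eqP ne_xa]; last first.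
  by move=> /rgc_lt_cat_cons /(_ ne_xa); rewrite odd_s; lia.
have odd_sa : odd (sumn (rcons s a)).
  by rewrite -cats1 sumn_cat /= addn0 oddD odd_s (negbTE even_a).
rewrite -!(cat_rcons a); case: (eqVneq y a.+1) => [-> | /eqP ne_ya]; last first.
  by move=> /rgc_lt_cat_cons /(_ ne_ya); rewrite odd_sa; lia.
rewrite -!(cat_rcons a.+1); apply: no_rgc_lt_cat_nseq0.
by rewrite -cats1 sumn_cat /= addn0 oddD odd_sa /= (negbTE even_a).
Qed.

Lemma rgc_first_eq (S : seq nat -> Prop) (t c : seq nat) :
  rgc_first S t -> S c -> (forall u, S u -> ~ rgc_lt u c) -> t = c.
Proof.
case=> St t_lt Sc c_min; case: (eqVneq c t) => [-> // | /eqP ne_ct].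
by case: (c_min t St); apply: t_lt.
Qed.

Lemma prefRnb_rgf (s : seq nat) (n b : nat) (u : seq nat) :
  prefRnb s n b u -> rgf s /\ all (fun x => x <= b) s.
Proof. by case=> /prefixP [w ->] [_ [/rgf_catl rgf_s]]; rewrite all_cat => /andP []. Qed.

Lemma prefRnb_cat_nseq0 (s p : seq nat) (n b m : nat) : 0 < size s ->
  rgf (s ++ p) -> all (fun x => x <= b) (s ++ p) -> size s + size p + m = n ->
  prefRnb s n b (s ++ p ++ nseq m 0).
Proof.
move=> s_gt0 rgf_sp le_b size_n; split; first exact: prefix_prefix.
rewrite catA; split; first by rewrite size_cat size_nseq size_cat.
split; first by apply: rgf_cat_nseq0; rewrite // size_cat; lia.
by rewrite all_cat le_b all_nseq orbT.
Qed.

Lemma prefRnb_next_le (s w : seq nat) (n b x : nat) : 0 < size s ->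
  prefRnb s n b (s ++ x :: w) -> x <= minn b (\max_(y <- s) y).+1.
Proof.
move=> s_gt0 [_ [_ [/(rgf_cat_cons_le s_gt0) le_x_max]]].
by rewrite all_cat /= leq_min le_x_max andbT => /and3P [].
Qed.

Lemma prefRnb_next2_le (s w : seq nat) (n b x y : nat) : 0 < size s ->
  prefRnb s n b (s ++ x :: y :: w) -> y <= (maxn (\max_(z <- s) z) x).+1.
Proof.
move=> s_gt0 [_ [_ [rgf_u _]]]; move: rgf_u; rewrite -cat_rcons.
by move=> /rgf_cat_cons_le; rewrite size_rcons -cats1 big_cat big_seq1; apply.
Qed.

Lemma rgc_first_prefRnb_eq (s t c : seq nat) (n b : nat) : size s + 2 <= n ->
  rgc_first (prefRnb s n b) t -> prefRnb s n b c ->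
  (forall x y w, prefRnb s n b (s ++ x :: y :: w) -> ~ rgc_lt (s ++ x :: y :: w) c) ->
  t = c.
Proof.
move=> le_sn t_first c_in c_min; apply: (rgc_first_eq t_first c_in) => u u_in.
case: (u_in) => /prefixP [[|x [|y w]] eq_u] [size_u _].
- by move: size_u; rewrite eq_u cats0; lia.
- by move: size_u; rewrite eq_u size_cat /=; lia.
- by rewrite eq_u in u_in *; exact: c_min.
Qed.

Lemma even_minn_odd_lt (b m : nat) : odd b -> ~~ odd (minn b m) -> m < b.
Proof.
move=> odd_b even_min; have : minn b m != b by apply: contraNneq even_min => ->.
lia.
Qed.

Theorem proposition2 (b n k : nat) (s t : seq nat) :
  odd b -> 0 < n -> 0 < k -> k + 2 <= n -> size s = k ->
  (exists u, prefRnb s n b u) ->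
  rgc_first (prefRnb s n b) t ->
  let M := minn b (\max_(x <- s) x).+1 in
  [/\ (odd (sumn s) -> odd M -> t = s ++ M :: nseq (n - k - 1) 0),
      (odd (sumn s) -> ~~ odd M -> t = s ++ M :: M.+1 :: nseq (n - k - 2) 0) &
      (~~ odd (sumn s) -> t = s ++ nseq (n - k) 0)].
Proof.
move=> odd_b _ k_gt0 le_kn size_s [u0 /prefRnb_rgf [rgf_s le_b_s]] t_first M.
have s_gt0 : 0 < size s by rewrite size_s.
have le_sn : size s + 2 <= n by rewrite size_s.
have [le_Mb le_M_max] : M <= b /\ M <= (\max_(x <- s) x).+1.
  by apply/andP; rewrite -leq_min.
split=> [odd_s odd_M | odd_s even_M | even_s].
- apply: (rgc_first_prefRnb_eq le_sn t_first) => [|x y w u_in].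
  + apply: (prefRnb_cat_nseq0 (p := [:: M])) => //; last by rewrite size_s /=; lia.
    * by rewrite cats1; apply/rgf_rcons.
    * by rewrite all_cat le_b_s /= le_Mb.
  + exact: no_rgc_lt_odd_cons_nseq0 odd_s odd_M (prefRnb_next_le s_gt0 u_in).
- have lt_max_b := even_minn_odd_lt odd_b even_M.
  have M_max : M = (\max_(x <- s) x).+1 by apply/minn_idPr; apply: ltnW.
  apply: (rgc_first_prefRnb_eq le_sn t_first) => [|x y w u_in].
  + apply: (prefRnb_cat_nseq0 (p := [:: M; M.+1])) => //; last by rewrite size_s /=; lia.
    * by rewrite M_max; apply: rgf_cat_succ_max.
    * by rewrite all_cat le_b_s /= le_Mb; lia.
  + apply: no_rgc_lt_even_cons2_nseq0 => //; first exact: prefRnb_next_le s_gt0 u_in.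
    have := prefRnb_next_le s_gt0 u_in; have := prefRnb_next2_le s_gt0 u_in.
    rewrite M_max; lia.
- apply: (rgc_first_prefRnb_eq le_sn t_first) => [|x y w _].
  + by apply: (prefRnb_cat_nseq0 (p := [::])); rewrite ?cats0 // size_s /=; lia.
  + exact: no_rgc_lt_cat_nseq0 even_s.
Qed.
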